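(* For every $\beta=(\beta_1,\dots,\beta_k)\in\mathbb P^k$ with $k\ge 1$, and for $t\ge0$ and $\mathrm{Re}(z)<0$, $$\phi\tbinom{0^k}{\beta}=\sum_{n=0}^\infty\Bigg(\sum_{(s_1,\dots,s_k)\in \mathrm{WC}_k(n)}\Big(\sum_{i=0}^{s_1}\frac{b_{s_1-i}}{i!(s_1-i)!}t^i\Big)\frac{b_{s_2}\cdots b_{s_k}}{s_2!\cdots s_k!}(\beta_1+\cdots+\beta_k)^{s_1-1}(\beta_2+\cdots+\beta_k)^{s_2-1}\cdots\beta_k^{s_k-1}\Bigg)z^{n-k}.$$
   Context: $\mathbb P$ denotes the positive integers. For $\beta\in\mathbb P^k$, real $t\ge0$ and complex $z$ with $\mathrm{Re}(z)<0$, define $$\phi\tbinom{0^k}{\beta}=\sum_{0<i_1<\cdots<i_k}e^{(i_1+t)\beta_1z}\cdots e^{(i_k+t)\beta_kz}.$$ This series is absolutely convergent and is identified with its Laurent expansion in $z$. $\mathrm{WC}_k(n)$ denotes the set of sequences $(s_1,\dots,s_k)$ of nonnegative integers with $s_1+\dots+s_k=n$. The numbers $b_s$ are defined by $b_0=-1$, $b_1=-\tfrac12$ and $b_s=-B_s$ for $s\ge2$. Here $B_s$ are the Bernoulli numbers given by $z/(e^z-1)=\sum_{s\ge0}B_sz^s/s!$. Equivalently, $e^z/(1-e^z)=\sum_{s\ge0}\frac{b_s}{s!}z^{s-1}$. *)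

From Stdlib Require Import Reals ZArith List.
From Coquelicot Require Import Coquelicot.
Open Scope R_scope.

Definition cexp (z : C) : C := (exp (Re z) * cos (Im z), exp (Re z) * sin (Im z)).

(* Bernoulli numbers with B_1 = -1/2 (z/(e^z-1) = sum B_s z^s/s!), via the
   coefficient recurrence  sum_{i=0}^{n} C(n+1,i) B_i = 0 (n >= 1), B_0 = 1.
   bern_upto m j = B_j for j <= m. *)
Fixpoint bern_upto (m : nat) : nat -> R :=
  match m with
  | O => fun _ => 1
  | S m' =>
      let f := bern_upto m' in
      fun j => if (j <=? m')%nat then f j
               else - / INR (m' + 2) *
                    sum_f_R0 (fun i => Binomial.C (m' + 2) i * f i) m'
  end.

Definition bernoulli (n : nat) : R := bern_upto n n.

Definition bnum (s : nat) : R :=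
  match s with
  | O => -1
  | S O => - / 2
  | _ => - bernoulli s
  end.

(* Sum of F over WC_k(n): all lists (s_1,...,s_k) of naturals with sum n. *)
Fixpoint sum_WC (k n : nat) (F : list nat -> R) : R :=
  match k with
  | O => if (n =? 0)%nat then F nil else 0
  | S k' => sum_f_R0 (fun s => sum_WC k' (n - s) (fun l => F (s :: l))) n
  end.

Definition first_factor (s1 : nat) (t : R) : R :=
  sum_f_R0 (fun i => bnum (s1 - i) / (INR (fact i) * INR (fact (s1 - i))) * t ^ i) s1.

Fixpoint tail_factor (s : list nat) : R :=
  match s with
  | nil => 1
  | x :: s' => bnum x / INR (fact x) * tail_factor s'
  end.

Fixpoint pow_factor (s beta : list nat) : R :=
  match s, beta with
  | s1 :: s', b1 :: b' =>
      powerRZ (INR (list_sum (b1 :: b'))) (Z.of_nat s1 - 1) * pow_factor s' b'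
  | _, _ => 1
  end.

Definition term (beta : list nat) (t : R) (s : list nat) : R :=
  match s with
  | nil => 0
  | s1 :: s' => first_factor s1 t * tail_factor s' * pow_factor s beta
  end.

(* The coefficient of z^{n-k} on the right-hand side. *)
Definition coef (beta : list nat) (t : R) (n : nat) : R :=
  sum_WC (length beta) n (term beta t).

(* Sum over lo < i_1 < ... < i_k <= N of prod_j e^{(i_j+t) beta_j z}. *)
Fixpoint phi_box (beta : list nat) (t : R) (z : C) (lo N : nat) : C :=
  match beta with
  | nil => RtoC 1
  | b1 :: b' =>
      sum_n_m (fun i => Cmult (cexp (Cmult (RtoC ((INR i + t) * INR b1)) z))
                              (phi_box b' t z i N)) (S lo) N
  end.

(* Partial sums of phi(0^k; beta) over 0 < i_1 < ... < i_k <= N. *)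
Definition phi_partial (beta : list nat) (t : R) (z : C) (N : nat) : C :=
  phi_box beta t z 0 N.

(* Summing over the innermost index first, the truncated sums of phi converge, with error
   O(e^(N Re z)), to e^(t S_1 z) G(S_1 z) ... G(S_k z), where S_j = beta_j + ... + beta_k and
   G(w) = e^w / (1 - e^w) = sum_(i >= 1) e^(i w).  The Bernoulli recurrence says exactly that
   H(w) = sum_s b_s w^s / s! satisfies H(w) (1 - e^w) = w e^w, i.e. H(w) = w G(w); as
   |b_s / s!| <= 2^s, this series converges for |w| < 1/2.  Multiplying the power series of
   e^(t S_1 z) and of the z G(S_j z) by Cauchy products then yields, coefficient by
   coefficient, z^k times the right-hand side. *)

From Stdlib Require Import Reals ZArith List Lia Lra.
From Coquelicot Require Import Coquelicot.
Open Scope R_scope.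

(* Equalities stated in Coquelicot's generic structures must be retyped at [R] or [C]
   before [ring] recognises them. *)
Ltac ring_eq :=
  match goal with |- ?x = ?y => first [change (@eq R x y) | change (@eq C x y)]; ring end.

(** * Complex series *)

Lemma Re_sum_n (u : nat -> C) (n : nat) : Re (sum_n u n) = sum_n (fun k => Re (u k)) n.
Proof. induction n as [|n IH]; [now rewrite !sum_O | now rewrite !sum_Sn, <- IH]. Qed.

Lemma Im_sum_n (u : nat -> C) (n : nat) : Im (sum_n u n) = sum_n (fun k => Im (u k)) n.
Proof. induction n as [|n IH]; [now rewrite !sum_O | now rewrite !sum_Sn, <- IH]. Qed.

Lemma RtoC_sum_n (a : nat -> R) (n : nat) : RtoC (sum_n a n) = sum_n (fun k => RtoC (a k)) n.
Proof.
  induction n as [|n IH]; [now rewrite !sum_O|].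
  rewrite !sum_Sn, <- IH. apply RtoC_plus.
Qed.

Lemma sum_n_first {G : AbelianMonoid} (f : nat -> G) (n : nat) :
  sum_n f (S n) = plus (f O) (sum_n (fun k => f (S k)) n).
Proof. unfold sum_n. now rewrite sum_Sn_m, <- sum_n_m_S by lia. Qed.

Lemma is_series_zero_tail {K : AbsRing} {V : NormedModule K} (u : nat -> V) :
  (forall n, u (S n) = zero) -> is_series u (u O).
Proof.
  intros H. apply (filterlim_ext (fun _ => u O)); [|apply filterlim_const].
  induction x as [|n IH]; [now rewrite sum_O|].
  now rewrite sum_Sn, <- IH, H, plus_zero_r.
Qed.

Lemma is_series_C (u : nat -> C) (l : C) :
  is_series u l <->
  is_series (fun n => Re (u n)) (Re l) /\ is_series (fun n => Im (u n)) (Im l).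
Proof.
  unfold is_series. split.
  - intros H. split; apply filterlim_locally; intros eps;
      refine (filter_imp _ _ _ (proj1 (filterlim_locally _ _) H eps));
      intros n [Hre Him]; [rewrite Re_sum_n in Hre | rewrite Im_sum_n in Him]; assumption.
  - intros [Hre Him]. apply filterlim_locally. intros eps.
    refine (filter_imp _ _ _ (filter_and _ _ (proj1 (filterlim_locally _ _) Hre eps)
                                         (proj1 (filterlim_locally _ _) Him eps))).
    intros n [Hr Hi]. rewrite <- Re_sum_n in Hr. rewrite <- Im_sum_n in Hi. now split.
Qed.

Lemma is_series_C_unique (u : nat -> C) (l1 l2 : C) :
  is_series u l1 -> is_series u l2 -> l1 = l2.
Proof.
  rewrite !is_series_C. intros [Hr1 Hi1] [Hr2 Hi2].
  apply is_series_unique in Hr1, Hr2, Hi1, Hi2.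
  destruct l1, l2; simpl in *; congruence.
Qed.

Lemma is_series_RtoC (u : nat -> R) (l : R) :
  is_series u l -> is_series (fun n => RtoC (u n)) (RtoC l).
Proof.
  intros H. apply is_series_C. split; [exact H|].
  exact (is_series_zero_tail (fun _ => 0) (fun _ => eq_refl)).
Qed.

Lemma ex_series_Rabs_le (a b : nat -> R) :
  (forall n, Rabs (a n) <= b n) -> ex_series b -> ex_series (fun n => Rabs (a n)).
Proof.
  intros Hab. apply (@ex_series_le _ R_CompleteNormedModule). intros n.
  change (norm ?x) with (Rabs x). now rewrite Rabs_Rabsolu.
Qed.

Lemma im_le_Cmod (c : C) : Rabs (Im c) <= Cmod c.
Proof. exact (Rle_trans _ _ _ (Rmax_r _ _) (Rmax_Cmod c)). Qed.

Lemma is_series_C_mult (u v : nat -> C) (lu lv : C) :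
  is_series u lu -> is_series v lv ->
  ex_series (fun n => Cmod (u n)) -> ex_series (fun n => Cmod (v n)) ->
  is_series (fun n => sum_n (fun k => u k * v (n - k)%nat)%C n) (lu * lv)%C.
Proof.
  rewrite !is_series_C. intros [Hur Hui] [Hvr Hvi] Hu Hv.
  assert (Aur := ex_series_Rabs_le _ _ (fun n => re_le_Cmod (u n)) Hu).
  assert (Aui := ex_series_Rabs_le _ _ (fun n => im_le_Cmod (u n)) Hu).
  assert (Avr := ex_series_Rabs_le _ _ (fun n => re_le_Cmod (v n)) Hv).
  assert (Avi := ex_series_Rabs_le _ _ (fun n => im_le_Cmod (v n)) Hv).
  split.
  - eapply is_series_ext; [|apply (is_series_minus _ _ _ _
      (is_series_mult _ _ _ _ Hur Hvr Aur Avr) (is_series_mult _ _ _ _ Hui Hvi Aui Avi))].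
    intros n. rewrite Re_sum_n, sum_n_Reals. change (plus ?x (opp ?y)) with (x - y).
    rewrite <- minus_sum. apply sum_eq. intros k _.
    destruct (u k), (v (n - k)%nat). simpl. ring.
  - eapply is_series_ext; [|apply (is_series_plus _ _ _ _
      (is_series_mult _ _ _ _ Hur Hvi Aur Avi) (is_series_mult _ _ _ _ Hui Hvr Aui Avr))].
    intros n. rewrite Im_sum_n, sum_n_Reals. change (plus ?x ?y) with (x + y).
    rewrite <- plus_sum. apply sum_eq. intros k _.
    destruct (u k), (v (n - k)%nat). simpl. ring.
Qed.

(** * Power series with real coefficients at a complex point *)

(* Absolute convergence is part of the definition: it is what Cauchy products need. *)
Definition is_Cpseries (a : nat -> R) (z l : C) : Prop :=
  is_series (fun n => (a n * z ^ n)%C) l /\ ex_series (fun n => Rabs (a n) * Cmod z ^ n).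

Lemma Cmod_Cpseries_term (a : R) (z : C) (n : nat) :
  Cmod (a * z ^ n)%C = Rabs a * Cmod z ^ n.
Proof. now rewrite Cmod_mult, Cmod_R, Cmod_pow. Qed.

Lemma ex_series_Cmod_Cpseries (a : nat -> R) (z : C) :
  ex_series (fun n => Rabs (a n) * Cmod z ^ n) -> ex_series (fun n => Cmod (a n * z ^ n)%C).
Proof. apply ex_series_ext. intros n. now rewrite Cmod_Cpseries_term. Qed.

Section Cpseries.

Variable z : C.

Lemma is_Cpseries_ext (a b : nat -> R) (l : C) :
  (forall n, a n = b n) -> is_Cpseries a z l -> is_Cpseries b z l.
Proof.
  intros E [H A].
  split; [eapply is_series_ext; [|exact H] | eapply ex_series_ext; [|exact A]];
    intros n; cbv beta; now rewrite E.
Qed.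

Lemma is_Cpseries_unique (a : nat -> R) (l1 l2 : C) :
  is_Cpseries a z l1 -> is_Cpseries a z l2 -> l1 = l2.
Proof. intros [H1 _] [H2 _]. exact (is_series_C_unique _ _ _ H1 H2). Qed.

Lemma ex_Cpseries_pow_bound (a : nat -> R) (rho : R) :
  (forall n, Rabs (a n) <= rho ^ n) -> rho * Cmod z < 1 -> exists l, is_Cpseries a z l.
Proof.
  intros Ha Hz.
  assert (Hrho : 0 <= rho) by (rewrite <- pow_1; exact (Rle_trans _ _ _ (Rabs_pos _) (Ha 1%nat))).
  assert (A : ex_series (fun n => Rabs (a n) * Cmod z ^ n)).
  { apply (@ex_series_le _ R_CompleteNormedModule _ (fun n => (rho * Cmod z) ^ n)).
    - intros n. change (norm ?x) with (Rabs x). rewrite Rpow_mult_distr.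
      assert (0 <= Cmod z ^ n) by (apply pow_le, Cmod_ge_0).
      rewrite Rabs_pos_eq by (apply Rmult_le_pos; [apply Rabs_pos | assumption]).
      now apply Rmult_le_compat_r.
    - apply ex_series_geom. rewrite Rabs_pos_eq; [assumption|].
      apply Rmult_le_pos; [assumption | apply Cmod_ge_0]. }
  assert (Hs : ex_series (fun n => (a n * z ^ n)%C)).
  { refine (@ex_series_le _ C_CompleteNormedModule _ _ _ A). intros n.
    change (norm ?x) with (Cmod x). rewrite Cmod_Cpseries_term. apply Rle_refl. }
  destruct Hs as [l Hl]. now exists l.
Qed.

Lemma is_Cpseries_mult (a b : nat -> R) (la lb : C) :
  is_Cpseries a z la -> is_Cpseries b z lb -> is_Cpseries (PS_mult a b) z (la * lb)%C.
Proof.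
  intros [Ha Aa] [Hb Ab]. split.
  - eapply is_series_ext; [|exact (is_series_C_mult _ _ _ _ Ha Hb
      (ex_series_Cmod_Cpseries _ _ Aa) (ex_series_Cmod_Cpseries _ _ Ab))].
    intros n. unfold PS_mult. rewrite <- sum_n_Reals, RtoC_sum_n.
    rewrite <- (sum_n_mult_r (K := C_Ring)). apply sum_n_ext_loc. intros k Hk.
    change (mult ?x ?y) with (Cmult x y).
    replace (Cpow z n) with (z ^ k * z ^ (n - k))%C by (rewrite <- Cpow_add_r; f_equal; lia).
    rewrite RtoC_mult. ring_eq.
  - apply (@ex_series_le _ R_CompleteNormedModule _
      (PS_mult (fun n => Rabs (a n) * Cmod z ^ n) (fun n => Rabs (b n) * Cmod z ^ n))).
    + intros n. change (norm ?x) with (Rabs x).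
      rewrite Rabs_pos_eq by (apply Rmult_le_pos; [apply Rabs_pos | apply pow_le, Cmod_ge_0]).
      unfold PS_mult.
      eapply Rle_trans; [apply Rmult_le_compat_r; [apply pow_le, Cmod_ge_0 | apply Rsum_abs]|].
      rewrite Rmult_comm, scal_sum. apply Req_le, sum_eq. intros k Hk.
      replace (Cmod z ^ n) with (Cmod z ^ k * Cmod z ^ (n - k))
        by (rewrite <- pow_add; f_equal; lia).
      rewrite Rabs_mult. ring.
    + destruct Aa as [sa Hsa], Ab as [sb Hsb]. exists (sa * sb).
      apply is_series_mult_pos; auto; intros n;
        apply Rmult_le_pos; try apply Rabs_pos; apply pow_le, Cmod_ge_0.
Qed.

Lemma is_Cpseries_scal (c : R) (a : nat -> R) (l : C) :
  is_Cpseries a z l -> is_Cpseries (fun n => c * a n) z (c * l)%C.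
Proof.
  intros [H A]. split.
  - eapply is_series_ext; [|exact (is_series_scal (K := C_AbsRing) (RtoC c) _ _ H)].
    intros n. change (scal ?x ?y) with (Cmult x y). rewrite RtoC_mult. ring_eq.
  - eapply ex_series_ext; [|exact (ex_series_scal_r (Rabs c) _ A)].
    intros n. rewrite Rabs_mult. ring_eq.
Qed.

Lemma is_Cpseries_plus (a b : nat -> R) (la lb : C) :
  is_Cpseries a z la -> is_Cpseries b z lb -> is_Cpseries (fun n => a n + b n) z (la + lb)%C.
Proof.
  intros [Ha Aa] [Hb Ab]. split.
  - eapply is_series_ext; [|exact (is_series_plus _ _ _ _ Ha Hb)].
    intros n. change (plus ?x ?y) with (Cplus x y). rewrite RtoC_plus. ring_eq.
  - refine (@ex_series_le _ R_CompleteNormedModule _ _ _ (ex_series_plus _ _ Aa Ab)).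
    intros n. change (norm ?x) with (Rabs x). change (plus ?x ?y) with (x + y).
    rewrite Rabs_pos_eq by (apply Rmult_le_pos; [apply Rabs_pos | apply pow_le, Cmod_ge_0]).
    rewrite <- Rmult_plus_distr_r. apply Rmult_le_compat_r; [apply pow_le, Cmod_ge_0|].
    apply Rabs_triang.
Qed.

Lemma is_Cpseries_incr_1 (a : nat -> R) (l : C) :
  is_Cpseries a z l -> is_Cpseries (PS_incr_1 a) z (z * l)%C.
Proof.
  intros [H A]. split.
  - apply is_series_decr_1.
    match goal with |- is_series _ ?v => replace v with (scal z l) end.
    2:{ change ((z * l)%C = (z * l + - (0 * 1))%C). ring. }
    eapply is_series_ext; [|exact (is_series_scal (K := C_AbsRing) z _ _ H)].
    intros n. change (scal ?x ?y) with (Cmult x y). simpl. ring_eq.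
  - apply ex_series_incr_1.
    eapply ex_series_ext; [|exact (ex_series_scal_r (Cmod z) _ A)].
    intros n. simpl. ring.
Qed.

Lemma is_Cpseries_1 : is_Cpseries (fun n => if (n =? 0)%nat then 1 else 0) z 1.
Proof.
  split.
  - replace (RtoC 1) with (RtoC 1 * z ^ 0)%C by ring.
    apply (is_series_zero_tail (fun n => (RtoC (if (n =? 0)%nat then 1 else 0) * z ^ n)%C)).
    intros n. change (0 * z ^ S n = 0)%C. ring.
  - eexists.
    apply (is_series_zero_tail (fun n => Rabs (if (n =? 0)%nat then 1 else 0) * Cmod z ^ n)).
    intros n. change (Rabs 0 * Cmod z ^ S n = 0). rewrite Rabs_R0. ring.
Qed.

End Cpseries.

Lemma is_Cpseries_dilate (a : nat -> R) (c : R) (z l : C) :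
  is_Cpseries a (c * z) l -> is_Cpseries (fun n => a n * c ^ n) z l.
Proof.
  intros [H A]. split.
  - eapply is_series_ext; [|exact H]. intros n. cbv beta.
    rewrite Cpow_mult_l, RtoC_mult, RtoC_pow. ring_eq.
  - eapply ex_series_ext; [|exact A]. intros n. cbv beta.
    rewrite Cmod_mult, Cmod_R, Rpow_mult_distr, Rabs_mult, RPow_abs. ring_eq.
Qed.

(** * The complex exponential *)

Lemma Cpow_binomial (a b : C) (n : nat) :
  ((a + b) ^ n)%C = sum_n (fun k => Binomial.C n k * a ^ k * b ^ (n - k))%C n.
Proof.
  induction n as [|[|m] IH].
  - rewrite sum_O, C_n_0. simpl. ring.
  - rewrite sum_Sn, sum_O, C_n_0, C_n_n. change (plus ?x ?y) with (Cplus x y). simpl. ring.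
  - set (T j k := (Binomial.C j k * a ^ k * b ^ (j - k))%C) in *.
    assert (Tdiag : forall j, T j j = (a ^ j)%C).
    { intros j. unfold T. rewrite C_n_n, Nat.sub_diag. simpl. ring. }
    assert (Tzero : forall j, T j O = (b ^ j)%C).
    { intros j. unfold T. rewrite C_n_0, Nat.sub_0_r. simpl. ring. }
    assert (Pascal : forall k, (k <= m)%nat ->
      T (S (S m)) (S k) = plus (mult a (T (S m) k)) (mult b (T (S m) (S k)))).
    { intros k Hk. unfold T. change (plus ?x ?y) with (Cplus x y).
      change (mult ?x ?y) with (Cmult x y). rewrite <- pascal, RtoC_plus by lia.
      replace (S (S m) - S k)%nat with (S (S m - S k)) by lia.
      replace (S m - k)%nat with (S (S m - S k)) by lia. simpl. ring. }
    rewrite Cpow_S, IH, (sum_n_first (T (S (S m)))), (sum_Sn (fun k => T (S (S m)) (S k))).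
    rewrite (sum_n_ext_loc _ _ _ Pascal), sum_n_plus, Cmult_plus_distr_r.
    change (fun k => (Binomial.C (S m) k * a ^ k * b ^ (S m - k))%C) with (T (S m)).
    rewrite (sum_Sn (T (S m))) at 1.
    rewrite (sum_n_first (T (S m))), !(sum_n_mult_l (K := C_Ring)), !Tdiag, !Tzero.
    change (@sum_n (Ring.AbelianMonoid C_Ring)) with (@sum_n C_AbelianMonoid).
    repeat change (plus ?x ?y) with (Cplus x y). repeat change (mult ?x ?y) with (Cmult x y).
    rewrite !Cpow_S. ring.
Qed.

Definition inv_fact (n : nat) : R := / INR (fact n).

Lemma inv_fact_pos (n : nat) : 0 < inv_fact n.
Proof. apply Rinv_0_lt_compat, INR_fact_lt_0. Qed.

Lemma ex_series_inv_fact_abs (w : C) : ex_series (fun n => Rabs (inv_fact n) * Cmod w ^ n).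
Proof.
  exists (exp (Cmod w)). eapply is_series_ext; [|exact (is_exp_Reals (Cmod w))].
  intros n. change (scal ?x ?y) with (x * y).
  rewrite pow_n_pow, Rabs_pos_eq by (left; apply inv_fact_pos). apply Rmult_comm.
Qed.

Lemma is_series_of_pseries (a : nat -> R) (x l : R) :
  is_pseries a x l -> is_series (fun n => a n * x ^ n) l.
Proof.
  apply is_series_ext. intros n. change (scal ?u ?v) with (u * v).
  rewrite pow_n_pow. apply Rmult_comm.
Qed.

Lemma is_pseries_0 (x : R) : is_pseries (fun _ => 0) x 0.
Proof.
  apply (is_series_ext (fun _ => 0)); [intros n; change (scal ?u ?v) with (u * v); ring_eq|].
  exact (is_series_zero_tail (fun _ => 0) (fun _ => eq_refl)).
Qed.

Lemma is_pseries_cos (y : R) : is_pseries cos_n (y ^ 2) (cos y).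
Proof.
  unfold cos. destruct (exist_cos (Rsqr y)) as [c Hc].
  apply is_series_Reals in Hc. eapply is_series_ext; [|exact Hc]. intros n.
  change (scal ?u ?v) with (u * v). rewrite pow_n_pow, <- Rsqr_pow2. ring_eq.
Qed.

Lemma is_pseries_sin (y : R) : exists l, is_pseries sin_n (y ^ 2) l /\ sin y = y * l.
Proof.
  unfold sin. destruct (exist_sin (Rsqr y)) as [c Hc]. exists c. split; [|reflexivity].
  apply is_series_Reals in Hc. eapply is_series_ext; [|exact Hc]. intros n.
  change (scal ?u ?v) with (u * v). rewrite pow_n_pow, <- Rsqr_pow2. ring_eq.
Qed.

Lemma Ci_pow_even (m : nat) : (Ci ^ (2 * m))%C = RtoC ((-1) ^ m).
Proof.
  rewrite Cpow_mult_r, RtoC_pow. f_equal.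
  unfold Ci, RtoC. simpl. unfold Cmult. simpl. f_equal; ring.
Qed.

Lemma Ci_pow_odd (m : nat) : (Ci ^ (2 * m + 1))%C = (RtoC ((-1) ^ m) * Ci)%C.
Proof. now rewrite Cpow_add_r, Ci_pow_even, Cpow_1_r. Qed.

Lemma is_Cpseries_exp_R (x : R) : is_Cpseries inv_fact x (exp x).
Proof.
  split; [|apply ex_series_inv_fact_abs].
  eapply is_series_ext;
    [|exact (is_series_RtoC _ _ (is_series_of_pseries _ _ _ (is_exp_Reals x)))].
  intros n. cbv beta. now rewrite RtoC_mult, RtoC_pow.
Qed.

Lemma is_Cpseries_exp_iR (y : R) : is_Cpseries inv_fact (y * Ci) (cos y, sin y).
Proof.
  split; [|apply ex_series_inv_fact_abs].
  assert (Term : forall n,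
    (inv_fact n * (y * Ci) ^ n)%C = (RtoC (inv_fact n * y ^ n) * Ci ^ n)%C).
  { intros n. rewrite Cpow_mult_l, <- RtoC_pow, RtoC_mult. ring. }
  apply is_series_C. split.
  - assert (H : is_pseries (fun n => inv_fact n * Re (Ci ^ n)) y (cos y + y * 0)).
    { apply is_pseries_odd_even.
      - eapply is_pseries_ext; [|apply is_pseries_cos]. intros m.
        rewrite Ci_pow_even. unfold cos_n, inv_fact. simpl. field. apply INR_fact_neq_0.
      - eapply is_pseries_ext; [|apply is_pseries_0]. intros m.
        rewrite Ci_pow_odd. simpl. ring. }
    rewrite Rmult_0_r, Rplus_0_r in H.
    eapply is_series_ext; [|exact (is_series_of_pseries _ _ _ H)]. intros n.
    rewrite Term, re_scal_l. ring_eq.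
  - destruct (is_pseries_sin y) as [l [Hl Hsin]].
    assert (H : is_pseries (fun n => inv_fact n * Im (Ci ^ n)) y (0 + y * l)).
    { apply is_pseries_odd_even.
      - eapply is_pseries_ext; [|apply is_pseries_0]. intros m.
        rewrite Ci_pow_even. simpl. ring.
      - eapply is_pseries_ext; [|exact Hl]. intros m.
        rewrite Ci_pow_odd. unfold sin_n, inv_fact. simpl. field. apply INR_fact_neq_0. }
    rewrite Rplus_0_l, <- Hsin in H.
    eapply is_series_ext; [|exact (is_series_of_pseries _ _ _ H)]. intros n.
    rewrite Term, im_scal_l. ring_eq.
Qed.

Lemma cexp_add (v w : C) : cexp (v + w) = (cexp v * cexp w)%C.
Proof.
  destruct v as [x1 y1], w as [x2 y2]. unfold cexp, Cplus, Cmult. simpl.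
  rewrite exp_plus, cos_plus, sin_plus. f_equal; ring.
Qed.

Lemma cexp_0 : cexp 0 = 1.
Proof. unfold cexp. simpl. rewrite exp_0, cos_0, sin_0. unfold RtoC. f_equal; ring. Qed.

Lemma Cmod_cexp (w : C) : Cmod (cexp w) = exp (Re w).
Proof.
  destruct w as [x y]. unfold Cmod, cexp. simpl.
  replace (exp x * cos y * (exp x * cos y * 1) + exp x * sin y * (exp x * sin y * 1))
    with (exp x * exp x * ((sin y)² + (cos y)²)) by (unfold Rsqr; ring).
  rewrite sin2_cos2, Rmult_1_r. apply sqrt_square. left; apply exp_pos.
Qed.

(* e^(x + i y) = e^x e^(i y), and the Cauchy product of the two exponential series is the
   exponential series of x + i y by the binomial theorem. *)
Lemma is_Cpseries_cexp (w : C) : is_Cpseries inv_fact w (cexp w).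
Proof.
  split; [|apply ex_series_inv_fact_abs].
  destruct w as [x y].
  replace (x, y) with (RtoC x + RtoC y * Ci)%C
    by (unfold RtoC, Ci, Cplus, Cmult; simpl; f_equal; ring).
  rewrite cexp_add.
  replace (cexp (RtoC x)) with (RtoC (exp x))
    by (unfold cexp; simpl; rewrite cos_0, sin_0; unfold RtoC; f_equal; ring).
  replace (cexp (RtoC y * Ci)) with ((cos y, sin y) : C)
    by (unfold cexp; simpl; replace (y * 0 - 0 * 1) with 0 by ring;
        replace (y * 1 + 0 * 0) with y by ring; rewrite exp_0; f_equal; ring).
  destruct (is_Cpseries_exp_R x) as [Hx Ax], (is_Cpseries_exp_iR y) as [Hy Ay].
  eapply is_series_ext; [|exact (is_series_C_mult _ _ _ _ Hx Hy
    (ex_series_Cmod_Cpseries _ _ Ax) (ex_series_Cmod_Cpseries _ _ Ay))].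
  intros n. rewrite Cpow_binomial, <- (sum_n_mult_l (K := C_Ring)). apply sum_n_ext_loc.
  intros k Hk. change (mult ?u ?v) with (Cmult u v).
  assert (Binom : inv_fact k * inv_fact (n - k) = inv_fact n * Binomial.C n k).
  { unfold inv_fact, Binomial.C. field. repeat split; apply INR_fact_neq_0. }
  transitivity (RtoC (inv_fact k * inv_fact (n - k)) * (x ^ k * (y * Ci) ^ (n - k)))%C.
  - rewrite RtoC_mult. ring_eq.
  - rewrite Binom, RtoC_mult. ring_eq.
Qed.

Lemma Cmod_cexp_scal (r : R) (z : C) : Cmod (cexp (RtoC r * z)) = exp (r * Re z).
Proof. now rewrite Cmod_cexp, re_scal_l. Qed.

Lemma cexp_scal_plus (r s : R) (z : C) :
  cexp (RtoC (r + s) * z) = (cexp (RtoC r * z) * cexp (RtoC s * z))%C.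
Proof. rewrite <- cexp_add, RtoC_plus. f_equal. ring. Qed.

Lemma cexp_scal_nat (n : nat) (r : R) (z : C) :
  cexp (RtoC (INR n * r) * z) = (cexp (RtoC r * z) ^ n)%C.
Proof.
  induction n as [|n IH].
  - simpl. rewrite Rmult_0_l, Cmult_0_l. apply cexp_0.
  - rewrite S_INR, Rmult_plus_distr_r, Rmult_1_l, cexp_scal_plus, IH. simpl. ring.
Qed.

Lemma exp_le_mono (x y : R) : x <= y -> exp x <= exp y.
Proof. intros [H|H]; [left; now apply exp_increasing | rewrite H; apply Rle_refl]. Qed.

Lemma exp_INR_mult (n : nat) (x : R) : exp (INR n * x) = exp x ^ n.
Proof.
  induction n as [|n IH]; [simpl; rewrite Rmult_0_l; apply exp_0|].
  rewrite S_INR, Rmult_plus_distr_r, Rmult_1_l, exp_plus, IH. simpl. ring.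
Qed.

Lemma exp_neg_lt_1 (x : R) : x < 0 -> exp x < 1.
Proof. intros Hx. rewrite <- exp_0. now apply exp_increasing. Qed.

(** * The numbers b_s and the function e^w / (1 - e^w) *)

Lemma bern_upto_le (m j : nat) : (j <= m)%nat -> bern_upto m j = bernoulli j.
Proof.
  induction m as [|m IH]; intros Hjm.
  - now replace j with 0%nat by lia.
  - destruct (Nat.eq_dec j (S m)) as [->|Hne]; [reflexivity|].
    simpl. rewrite (proj2 (Nat.leb_le j m)) by lia. apply IH. lia.
Qed.

Lemma bernoulli_S (m : nat) :
  bernoulli (S m) =
  - / INR (m + 2) * sum_f_R0 (fun i => Binomial.C (m + 2) i * bernoulli i) m.
Proof.
  unfold bernoulli at 1. cbn [bern_upto]. rewrite (proj2 (Nat.leb_gt (S m) m)) by lia.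
  f_equal. apply sum_eq. intros i Hi. now rewrite bern_upto_le.
Qed.

Lemma bernoulli_1 : bernoulli 1 = - / 2.
Proof.
  rewrite bernoulli_S. simpl sum_f_R0. rewrite C_n_0.
  change (bernoulli 0) with 1. change (INR (0 + 2)) with (1 + 1). field.
Qed.

Lemma C_Sn_n (n : nat) : Binomial.C (S n) n = INR (S n).
Proof.
  unfold Binomial.C. replace (S n - n)%nat with 1%nat by lia.
  rewrite fact_simpl, mult_INR. simpl (fact 1). change (INR 1) with 1.
  field. apply INR_fact_neq_0.
Qed.

Lemma C_Sn_1 (n : nat) : Binomial.C (S n) 1 = INR (S n).
Proof. rewrite pascal_step1, Nat.sub_succ, Nat.sub_0_r by lia. apply C_Sn_n. Qed.

Lemma bernoulli_sum (m : nat) :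
  sum_f_R0 (fun i => Binomial.C (m + 2) i * bernoulli i) (S m) = 0.
Proof.
  simpl sum_f_R0 at 1. rewrite bernoulli_S.
  replace (m + 2)%nat with (S (S m)) by lia. rewrite C_Sn_n.
  field. apply not_0_INR. lia.
Qed.

Lemma sum_f_R0_single_1 (f : nat -> R) (N : nat) :
  (1 <= N)%nat -> f O = 0 -> (forall k, f (S (S k)) = 0) -> sum_f_R0 f N = f 1%nat.
Proof.
  intros HN H0 H2. induction N as [|[|N] IH]; [lia| |].
  - simpl. rewrite H0. ring.
  - simpl sum_f_R0. simpl sum_f_R0 in IH. rewrite IH, H2 by lia. ring.
Qed.

(* b_s = - B_s except at s = 1, where b_1 = B_1 = - B_1 - 1. *)
Lemma bnum_sum (m : nat) :
  sum_f_R0 (fun i => Binomial.C (S m) i * bnum i) m = - INR (S m).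
Proof.
  destruct m as [|m]; [simpl; rewrite C_n_0; ring|].
  transitivity (sum_f_R0 (fun i => Binomial.C (m + 2) i * (bnum i + bernoulli i)) (S m)
                - sum_f_R0 (fun i => Binomial.C (m + 2) i * bernoulli i) (S m)).
  - rewrite <- minus_sum. apply sum_eq. intros i _.
    replace (m + 2)%nat with (S (S m)) by lia. ring.
  - rewrite bernoulli_sum, sum_f_R0_single_1;
      [|lia|cbv beta; rewrite C_n_0; change (bnum 0 + bernoulli 0) with (-1 + 1); ring
       |intros k; cbn [bnum]; ring].
    replace (m + 2)%nat with (S (S m)) by lia.
    rewrite C_Sn_1, bernoulli_1. cbn [bnum]. field.
Qed.

(* b_s / s!, the coefficients of w e^w / (1 - e^w). *)
Definition bcoef (s : nat) : R := bnum s * inv_fact s.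

Lemma inv_fact_0 : inv_fact 0 = 1.
Proof. unfold inv_fact. simpl. apply Rinv_1. Qed.

Lemma inv_fact_1 : inv_fact 1 = 1.
Proof. unfold inv_fact. simpl. apply Rinv_1. Qed.

Lemma inv_fact_le_1 (n : nat) : inv_fact n <= 1.
Proof.
  rewrite <- Rinv_1. apply Rinv_le_contravar; [lra|].
  apply (le_INR 1), lt_O_fact.
Qed.

Lemma inv_fact_le_half (n : nat) : (2 <= n)%nat -> inv_fact n <= / 2.
Proof.
  intros Hn. apply Rinv_le_contravar; [lra|].
  apply (le_INR 2 (fact n)), (fact_le 2 n Hn).
Qed.

Lemma bcoef_conv (m : nat) :
  sum_f_R0 (fun k => bcoef k * inv_fact (S m - k)) m = - inv_fact m.
Proof.
  transitivity (inv_fact (S m) * sum_f_R0 (fun i => Binomial.C (S m) i * bnum i) m).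
  - rewrite scal_sum. apply sum_eq. intros i Hi. unfold bcoef, inv_fact, Binomial.C.
    field. repeat split; apply INR_fact_neq_0.
  - rewrite bnum_sum. unfold inv_fact. rewrite fact_simpl, mult_INR.
    field. split; [apply INR_fact_neq_0 | apply not_0_INR; lia].
Qed.

(* Coefficientwise, H = w e^w + H e^w for H(w) = sum_s bcoef s w^s. *)
Lemma bcoef_rec (n : nat) : bcoef n = PS_incr_1 inv_fact n + PS_mult bcoef inv_fact n.
Proof.
  unfold PS_mult. destruct n as [|m].
  - simpl. rewrite inv_fact_0. change zero with 0. ring.
  - rewrite tech5, bcoef_conv, Nat.sub_diag, inv_fact_0. simpl. ring.
Qed.

Lemma Rabs_bcoef_le (n : nat) : Rabs (bcoef n) <= 2 ^ n.
Proof.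
  induction n as [[|m] IH] using lt_wf_ind.
  - replace (bcoef 0) with (-1) by (unfold bcoef; rewrite inv_fact_0; simpl; ring).
    rewrite Rabs_left by lra. simpl. lra.
  - set (s := sum_f_R0 (fun k => bcoef k * inv_fact (S (S m) - k)) m).
    assert (E : bcoef (S m) = - inv_fact (S m) - s).
    { pose proof (bcoef_conv (S m)) as H. rewrite tech5 in H. cbv beta in H.
      rewrite Nat.sub_succ_l, Nat.sub_diag, inv_fact_1 in H by lia. fold s in H. lra. }
    assert (Hs : Rabs s <= / 2 * sum_f_R0 (fun k => 2 ^ k) m).
    { eapply Rle_trans; [apply Rsum_abs|]. rewrite scal_sum. apply sum_Rle. intros k Hk.
      rewrite Rabs_mult, (Rabs_pos_eq (inv_fact _)) by (left; apply inv_fact_pos).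
      apply Rmult_le_compat; [apply Rabs_pos | left; apply inv_fact_pos | apply IH; lia |].
      apply inv_fact_le_half. lia. }
    rewrite tech3 in Hs by lra.
    replace ((1 - 2 ^ S m) / (1 - 2)) with (2 ^ S m - 1) in Hs by field.
    assert (1 <= 2 ^ S m) by (apply pow_R1_Rle; lra).
    pose proof (inv_fact_le_1 (S m)). pose proof (inv_fact_pos (S m)).
    rewrite E. unfold Rminus. eapply Rle_trans; [apply Rabs_triang|].
    rewrite Rabs_Ropp, Rabs_Ropp, Rabs_pos_eq by lra. lra.
Qed.

(* The sum of the geometric series sum_(i >= 1) e^(i w), and also w^-1 sum_s b_s w^s / s!. *)
Definition exp_geom (w : C) : C := (cexp w / (1 - cexp w))%C.

Lemma Cmod_1_minus_ge (w : C) : 1 - Cmod w <= Cmod (1 - w)%C.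
Proof.
  pose proof (Cmod_triangle (1 - w)%C w) as H.
  replace (1 - w + w)%C with (RtoC 1) in H by ring. rewrite Cmod_1 in H. lra.
Qed.

Lemma one_minus_cexp_neq_0 (w : C) : Re w < 0 -> (1 - cexp w)%C <> 0%C.
Proof.
  intros Hw E. pose proof (Cmod_1_minus_ge (cexp w)) as H.
  rewrite E, Cmod_0, Cmod_cexp in H. pose proof (exp_neg_lt_1 _ Hw). lra.
Qed.

Lemma is_Cpseries_bcoef (w : C) :
  2 * Cmod w < 1 -> Re w < 0 -> is_Cpseries bcoef w (w * exp_geom w).
Proof.
  intros Hw Hre.
  destruct (ex_Cpseries_pow_bound w bcoef 2 Rabs_bcoef_le Hw) as [H HH].
  assert (Hrec := is_Cpseries_plus w _ _ _ _ (is_Cpseries_incr_1 w _ _ (is_Cpseries_cexp w))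
                    (is_Cpseries_mult w _ _ _ _ HH (is_Cpseries_cexp w))).
  apply (is_Cpseries_ext w _ bcoef) in Hrec; [|intros n; symmetry; apply bcoef_rec].
  assert (E := is_Cpseries_unique w _ _ _ HH Hrec).
  assert (Hne := one_minus_cexp_neq_0 w Hre).
  enough (Hval : H = (w * exp_geom w)%C) by now rewrite <- Hval.
  unfold exp_geom. replace H with (H * (1 - cexp w) / (1 - cexp w))%C by (field; exact Hne).
  replace (H * (1 - cexp w))%C with (H - H * cexp w)%C by ring.
  rewrite E at 1. field. exact Hne.
Qed.

Lemma powerRZ_pred (B : R) (s : nat) :
  B <> 0 -> powerRZ B (Z.of_nat s - 1) = / B * B ^ s.
Proof.
  intros HB. destruct s as [|s].
  - simpl. field. exact HB.
  - replace (Z.of_nat (S s) - 1)%Z with (Z.of_nat s) by lia.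
    rewrite <- pow_powerRZ. simpl. field. exact HB.
Qed.

(* The coefficients of z exp_geom (B z). *)
Definition exp_geom_coef (B : R) (s : nat) : R :=
  bnum s / INR (fact s) * powerRZ B (Z.of_nat s - 1).

Lemma is_Cpseries_exp_geom (B : R) (z : C) :
  0 < B -> 2 * (B * Cmod z) < 1 -> Re z < 0 ->
  is_Cpseries (exp_geom_coef B) z (z * exp_geom (B * z)).
Proof.
  intros HB Hz Hre.
  assert (HBz : 2 * Cmod (B * z)%C < 1) by (rewrite Cmod_mult, Cmod_R, Rabs_pos_eq; lra).
  assert (HreB : Re (B * z)%C < 0) by (rewrite re_scal_l; nra).
  pose proof (is_Cpseries_scal z (/ B) _ _
                (is_Cpseries_dilate _ _ _ _ (is_Cpseries_bcoef _ HBz HreB))) as H.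
  replace (z * exp_geom (B * z))%C with (RtoC (/ B) * (B * z * exp_geom (B * z)))%C.
  - eapply is_Cpseries_ext; [|exact H]. intros n. unfold exp_geom_coef, bcoef.
    rewrite powerRZ_pred by lra. unfold inv_fact.
    field. split; [lra | apply INR_fact_neq_0].
  - rewrite RtoC_inv by lra. field. intros E. apply RtoC_inj in E. lra.
Qed.

(** * The right-hand side as a product of power series *)

Lemma sum_WC_ext (k n : nat) (F G : list nat -> R) :
  (forall l, F l = G l) -> sum_WC k n F = sum_WC k n G.
Proof.
  revert n F G. induction k as [|k IH]; intros n F G H; simpl.
  - now rewrite H.
  - apply sum_eq. intros s _. apply IH. intros l. apply H.
Qed.

Lemma sum_WC_scal (k n : nat) (c : R) (F : list nat -> R) :
  sum_WC k n (fun l => c * F l) = c * sum_WC k n F.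
Proof.
  revert n F. induction k as [|k IH]; intros n F; simpl.
  - destruct (n =? 0)%nat; ring.
  - rewrite scal_sum. apply sum_eq. intros s _. rewrite IH. ring.
Qed.

Lemma sum_WC_S_factor (k n : nat) (f : nat -> R) (G F : list nat -> R) :
  (forall s l, F (s :: l) = f s * G l) ->
  sum_WC (S k) n F = PS_mult f (fun m => sum_WC k m G) n.
Proof.
  intros H. apply sum_eq. intros s _. rewrite <- sum_WC_scal.
  apply sum_WC_ext. intros l. apply H.
Qed.

Fixpoint phi_prod (z : C) (beta : list nat) : C :=
  match beta with
  | nil => 1
  | _ :: beta' => (exp_geom (INR (list_sum beta) * z) * phi_prod z beta')%C
  end.

(* The coefficient of z^m in z^k phi_prod z beta, k = length beta. *)
Definition phi_prod_coef (beta : list nat) (m : nat) : R :=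
  sum_WC (length beta) m (fun s => tail_factor s * pow_factor s beta).

Lemma phi_prod_coef_nil (m : nat) : phi_prod_coef nil m = if (m =? 0)%nat then 1 else 0.
Proof. unfold phi_prod_coef. simpl. destruct (m =? 0)%nat; ring. Qed.

Lemma phi_prod_coef_cons (b : nat) (beta : list nat) (m : nat) :
  phi_prod_coef (b :: beta) m =
  PS_mult (exp_geom_coef (INR (list_sum (b :: beta)))) (phi_prod_coef beta) m.
Proof. apply sum_WC_S_factor. intros s l. simpl. unfold exp_geom_coef. ring. Qed.

Lemma coef_cons (b : nat) (beta : list nat) (t : R) (n : nat) :
  coef (b :: beta) t n =
  PS_mult (fun s => first_factor s t * powerRZ (INR (list_sum (b :: beta))) (Z.of_nat s - 1))
          (phi_prod_coef beta) n.
Proof. apply sum_WC_S_factor. intros s l. simpl. ring. Qed.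

Lemma first_factor_mult (B t : R) (s : nat) : B <> 0 ->
  first_factor s t * powerRZ B (Z.of_nat s - 1) =
  PS_mult (fun i => inv_fact i * (t * B) ^ i) (exp_geom_coef B) s.
Proof.
  intros HB. unfold first_factor, PS_mult. rewrite Rmult_comm, scal_sum.
  apply sum_eq. intros i Hi. unfold exp_geom_coef, inv_fact. rewrite !powerRZ_pred by exact HB.
  replace (B ^ s) with (B ^ i * B ^ (s - i)) by (rewrite <- pow_add; f_equal; lia).
  rewrite Rpow_mult_distr. field. repeat split; try exact HB; apply INR_fact_neq_0.
Qed.

Lemma list_sum_pos (b : nat) (beta : list nat) :
  (forall b', In b' (b :: beta) -> (0 < b')%nat) -> 1 <= INR (list_sum (b :: beta)).
Proof. intros H. apply (le_INR 1). specialize (H b (or_introl eq_refl)). simpl. lia. Qed.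

Lemma list_sum_Cmod_tail (b : nat) (beta : list nat) (z : C) :
  2 * (INR (list_sum (b :: beta)) * Cmod z) < 1 -> 2 * (INR (list_sum beta) * Cmod z) < 1.
Proof.
  intros Hz. eapply Rle_lt_trans; [|exact Hz]. apply Rmult_le_compat_l; [lra|].
  apply Rmult_le_compat_r; [apply Cmod_ge_0 | apply le_INR; simpl; lia].
Qed.

Lemma is_Cpseries_phi_prod (z : C) (beta : list nat) :
  Re z < 0 -> (forall b, In b beta -> (0 < b)%nat) ->
  2 * (INR (list_sum beta) * Cmod z) < 1 ->
  is_Cpseries (phi_prod_coef beta) z (z ^ length beta * phi_prod z beta).
Proof.
  intros Hre. induction beta as [|b beta IH]; intros Hpos Hz.
  - eapply is_Cpseries_ext; [intros n; symmetry; apply phi_prod_coef_nil|].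
    replace (z ^ length nil * phi_prod z nil)%C with (RtoC 1) by (simpl; ring).
    apply is_Cpseries_1.
  - pose proof (list_sum_pos b beta Hpos) as HB.
    assert (Htail := IH (fun b' H => Hpos b' (or_intror H)) (list_sum_Cmod_tail _ _ _ Hz)).
    assert (Hhead := is_Cpseries_exp_geom (INR (list_sum (b :: beta))) z ltac:(lra) Hz Hre).
    eapply is_Cpseries_ext; [intros n; symmetry; apply phi_prod_coef_cons|].
    replace (z ^ length (b :: beta) * phi_prod z (b :: beta))%C
      with (z * exp_geom (INR (list_sum (b :: beta)) * z) *
            (z ^ length beta * phi_prod z beta))%C by (simpl; ring).
    exact (is_Cpseries_mult z _ _ _ _ Hhead Htail).
Qed.

Definition phi_box_lim (z : C) (t : R) (beta : list nat) (lo : nat) : C :=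
  (cexp (RtoC ((INR lo + t) * INR (list_sum beta)) * z) * phi_prod z beta)%C.

Lemma is_Cpseries_coef (z : C) (t : R) (b : nat) (beta : list nat) :
  Re z < 0 -> (forall b', In b' (b :: beta) -> (0 < b')%nat) ->
  2 * (INR (list_sum (b :: beta)) * Cmod z) < 1 ->
  is_Cpseries (coef (b :: beta) t) z (z ^ length (b :: beta) * phi_box_lim z t (b :: beta) 0).
Proof.
  intros Hre Hpos Hz.
  pose proof (list_sum_pos b beta Hpos) as HB.
  set (B := INR (list_sum (b :: beta))) in *.
  assert (Hexp := is_Cpseries_dilate _ _ _ _ (is_Cpseries_cexp (RtoC (t * B) * z))).
  assert (Hhead := is_Cpseries_mult z _ _ _ _ Hexp (is_Cpseries_exp_geom B z ltac:(lra) Hz Hre)).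
  assert (Htail := is_Cpseries_phi_prod z beta Hre (fun b' H => Hpos b' (or_intror H))
                     (list_sum_Cmod_tail _ _ _ Hz)).
  replace (z ^ length (b :: beta) * phi_box_lim z t (b :: beta) 0)%C
    with (cexp (RtoC (t * B) * z) * (z * exp_geom (B * z)) *
          (z ^ length beta * phi_prod z beta))%C.
  - eapply is_Cpseries_ext; [|exact (is_Cpseries_mult z _ _ _ _ Hhead Htail)].
    intros n. rewrite coef_cons. fold B. unfold PS_mult at 1. apply sum_eq. intros s _.
    now rewrite first_factor_mult by (apply Rgt_not_eq; lra).
  - unfold phi_box_lim. cbn [phi_prod length Cpow]. fold B.
    replace (INR 0 + t) with t by (simpl; ring). ring.
Qed.

(** * Convergence of the partial sums of phi *)

Lemma pow_decr_le (q : R) (m n : nat) : 0 <= q -> q <= 1 -> (m <= n)%nat -> q ^ n <= q ^ m.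
Proof.
  intros Hq0 Hq1 Hmn. replace n with (m + (n - m))%nat by lia. rewrite pow_add.
  rewrite <- (Rmult_1_r (q ^ m)) at 2. apply Rmult_le_compat_l; [apply pow_le; lra|].
  rewrite <- (pow1 (n - m)). apply pow_incr. lra.
Qed.

Lemma Cgeom_sum (w : C) (n N : nat) : (n <= S N)%nat ->
  ((1 - w) * sum_n_m (fun i => w ^ i) n N)%C = (w ^ n - w ^ S N)%C.
Proof.
  induction N as [|N IH]; intros Hn.
  - destruct n as [|[|n]]; [|rewrite sum_n_m_zero by lia|lia].
    + rewrite sum_n_n. simpl. ring.
    + change zero with (RtoC 0). ring.
  - destruct (Nat.eq_dec n (S (S N))) as [->|Hne].
    + rewrite sum_n_m_zero by lia. change zero with (RtoC 0). ring.
    + rewrite sum_n_Sm by lia. change (plus ?x ?y) with (Cplus x y).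
      rewrite Cmult_plus_distr_l, IH by lia. simpl. ring.
Qed.

Lemma Rgeom_sum (q : R) (n N : nat) : (n <= S N)%nat ->
  (1 - q) * sum_n_m (fun i => q ^ i) n N = q ^ n - q ^ S N.
Proof.
  induction N as [|N IH]; intros Hn.
  - destruct n as [|[|n]]; [|rewrite sum_n_m_zero by lia|lia].
    + rewrite sum_n_n. simpl. ring.
    + change zero with 0. simpl. ring.
  - destruct (Nat.eq_dec n (S (S N))) as [->|Hne].
    + rewrite sum_n_m_zero by lia. change zero with 0. ring.
    + rewrite sum_n_Sm by lia. change (plus ?x ?y) with (x + y).
      rewrite Rmult_plus_distr_l, IH by lia. simpl. ring.
Qed.

Lemma geom_sum_n_m_le (q : R) (n N : nat) :
  0 <= q < 1 -> sum_n_m (fun i => q ^ i) n N <= / (1 - q).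
Proof.
  intros Hq. apply (Rmult_le_reg_l (1 - q)); [lra|]. rewrite Rinv_r by lra.
  destruct (le_lt_dec n (S N)) as [Hn|Hn].
  - rewrite Rgeom_sum by exact Hn.
    pose proof (pow_decr_le q 0 n ltac:(lra) ltac:(lra) ltac:(lia)).
    pose proof (pow_le q (S N) ltac:(lra)). simpl in *. lra.
  - rewrite sum_n_m_zero by lia. change zero with 0. lra.
Qed.

Lemma Cgeom_tail_le (w : C) (q : R) (n N : nat) : Cmod w <= q < 1 ->
  Cmod (sum_n_m (fun i => w ^ i) n N - w ^ n / (1 - w))%C <= q ^ N / (1 - q).
Proof.
  intros Hw. pose proof (Cmod_ge_0 w).
  assert (Hden : 1 - q <= Cmod (1 - w)%C) by (pose proof (Cmod_1_minus_ge w); lra).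
  assert (Hne : (1 - w)%C <> 0%C) by (intros E; rewrite E, Cmod_0 in Hden; lra).
  assert (Hpow : forall k, (N <= k)%nat -> Cmod (w ^ k / (1 - w))%C <= q ^ N / (1 - q)).
  { intros k Hk. rewrite Cmod_div, Cmod_pow by exact Hne. unfold Rdiv.
    apply Rmult_le_compat; [apply pow_le; lra | left; apply Rinv_0_lt_compat; lra | |].
    - eapply Rle_trans; [apply pow_incr; split; [lra | apply Hw]|].
      apply pow_decr_le; lra || lia.
    - apply Rinv_le_contravar; lra. }
  destruct (le_lt_dec n (S N)) as [Hn|Hn].
  - assert (Hsum : sum_n_m (fun i => (w ^ i)%C) n N = ((w ^ n - w ^ S N) / (1 - w))%C).
    { rewrite <- (Cgeom_sum w n N Hn). unfold Cdiv.
      now rewrite (Cmult_comm (1 - w)), <- Cmult_assoc, Cinv_r, Cmult_1_r. }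
    rewrite Hsum. replace ((w ^ n - w ^ S N) / (1 - w) - w ^ n / (1 - w))%C
      with (- (w ^ S N / (1 - w)))%C by (field; exact Hne).
    rewrite Cmod_opp. apply Hpow. lia.
  - rewrite sum_n_m_zero by lia. change zero with (RtoC 0).
    replace (0 - w ^ n / (1 - w))%C with (- (w ^ n / (1 - w)))%C by ring.
    rewrite Cmod_opp. apply Hpow. lia.
Qed.

Section PhiBoxCons.

Variables (z : C) (t : R) (b : nat) (beta : list nat).
Hypotheses (Hre : Re z < 0) (Ht : 0 <= t) (Hb : (0 < b)%nat).

Let B := INR (list_sum (b :: beta)).
Let q := exp (Re z).
Let w := cexp (RtoC B * z).
Let c := (cexp (RtoC (t * B) * z) * phi_prod z beta)%C.
Let e (i : nat) := cexp (RtoC ((INR i + t) * INR b) * z).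

Lemma phi_box_lim_cons (lo : nat) :
  phi_box_lim z t (b :: beta) lo = (c * (w ^ S lo / (1 - w)))%C.
Proof.
  unfold phi_box_lim, c, w. cbn [phi_prod]. fold B. unfold exp_geom.
  replace ((INR lo + t) * B) with (t * B + INR lo * B) by ring.
  rewrite cexp_scal_plus, cexp_scal_nat, Cpow_S. unfold Cdiv. ring.
Qed.

Lemma e_mult_phi_box_lim (i : nat) : (e i * phi_box_lim z t beta i)%C = (c * w ^ i)%C.
Proof.
  unfold e, phi_box_lim, c, w. rewrite Cmult_assoc, <- cexp_scal_plus.
  replace ((INR i + t) * INR b + (INR i + t) * INR (list_sum beta)) with (t * B + INR i * B)
    by (unfold B; simpl list_sum; rewrite plus_INR; ring).
  rewrite cexp_scal_plus, cexp_scal_nat. ring.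
Qed.

(* Each inner limit contributes c w^i, so the outer sum is a truncated geometric series. *)
Lemma phi_box_cons_sub (lo N : nat) :
  (phi_box (b :: beta) t z lo N - phi_box_lim z t (b :: beta) lo)%C =
  (c * (sum_n_m (fun i => w ^ i) (S lo) N - w ^ S lo / (1 - w)) +
   sum_n_m (fun i => e i * (phi_box beta t z i N - phi_box_lim z t beta i)) (S lo) N)%C.
Proof.
  rewrite phi_box_lim_cons.
  change (phi_box (b :: beta) t z lo N)
    with (sum_n_m (fun i => e i * phi_box beta t z i N)%C (S lo) N).
  rewrite (sum_n_m_ext _ (fun i => plus (mult c (w ^ i)%C)
             (e i * (phi_box beta t z i N - phi_box_lim z t beta i))%C)).
  - rewrite sum_n_m_plus, (sum_n_m_mult_l (K := C_Ring)).
    change (plus ?x ?y) with (Cplus x y). change (mult ?x ?y) with (Cmult x y).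
    change (@sum_n_m (Ring.AbelianMonoid C_Ring)) with (@sum_n_m C_AbelianMonoid).
    set (Sw := @sum_n_m C_AbelianMonoid (fun i => (w ^ i)%C) (S lo) N).
    unfold Cdiv. ring.
  - intros i. rewrite <- e_mult_phi_box_lim. change (plus ?x ?y) with (Cplus x y).
    change (mult ?x ?y) with (Cmult x y). ring_eq.
Qed.

Lemma q_bounds : 0 < q < 1.
Proof. split; [apply exp_pos | now apply exp_neg_lt_1]. Qed.

Lemma Cmod_w_le : Cmod w <= q.
Proof.
  unfold w. rewrite Cmod_cexp_scal. apply exp_le_mono.
  assert (1 <= B) by (apply (le_INR 1); simpl; lia). nra.
Qed.

Lemma Cmod_c_le : Cmod c <= Cmod (phi_prod z beta).
Proof.
  unfold c. rewrite Cmod_mult, Cmod_cexp_scal. pose proof (Cmod_ge_0 (phi_prod z beta)).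
  assert (0 <= t * B) by (apply Rmult_le_pos; [lra | apply pos_INR]).
  assert (exp (t * B * Re z) <= 1) by (rewrite <- exp_0; apply exp_le_mono; nra). nra.
Qed.

Lemma Cmod_e_le (i : nat) : Cmod (e i) <= q ^ i.
Proof.
  unfold e, q. rewrite Cmod_cexp_scal, <- exp_INR_mult. apply exp_le_mono.
  pose proof (pos_INR i). assert (1 <= INR b) by (apply (le_INR 1); lia).
  assert (INR i <= (INR i + t) * INR b) by nra. nra.
Qed.

Lemma phi_box_cons_error (K : R) :
  (forall lo N, Cmod (phi_box beta t z lo N - phi_box_lim z t beta lo)%C <= K * q ^ N) ->
  forall lo N, Cmod (phi_box (b :: beta) t z lo N - phi_box_lim z t (b :: beta) lo)%C
               <= (Cmod (phi_prod z beta) + K) / (1 - q) * q ^ N.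
Proof.
  intros HK lo N. pose proof q_bounds as Hq.
  assert (HK0 : 0 <= K).
  { specialize (HK O O). simpl in HK.
    pose proof (Cmod_ge_0 (phi_box beta t z 0 0 - phi_box_lim z t beta 0)%C). lra. }
  assert (Hsum : Cmod (sum_n_m (fun i =>
                   e i * (phi_box beta t z i N - phi_box_lim z t beta i)) (S lo) N)%C
                 <= K * q ^ N / (1 - q)).
  { eapply Rle_trans; [apply (norm_sum_n_m (V := C_NormedModule))|].
    eapply Rle_trans; [apply (sum_n_m_le _ (fun i => K * q ^ N * q ^ i))|].
    - intros i. change (norm ?x) with (Cmod x). rewrite Cmod_mult, Rmult_comm.
      apply Rmult_le_compat; [apply Cmod_ge_0 | apply Cmod_ge_0 | apply HK | apply Cmod_e_le].
    - rewrite (sum_n_m_mult_l (K := R_Ring)). change (mult ?x ?y) with (x * y).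
      unfold Rdiv. apply Rmult_le_compat_l; [apply Rmult_le_pos; [lra | apply pow_le; lra]|].
      apply geom_sum_n_m_le. lra. }
  pose proof (Cgeom_tail_le w q (S lo) N (conj Cmod_w_le (proj2 Hq))) as Htail.
  rewrite phi_box_cons_sub. eapply Rle_trans; [apply Cmod_triangle|]. rewrite Cmod_mult.
  eapply Rle_trans; [apply Rplus_le_compat_r, Rmult_le_compat;
    [apply Cmod_ge_0 | apply Cmod_ge_0 | exact Cmod_c_le | exact Htail]|].
  replace ((Cmod (phi_prod z beta) + K) / (1 - q) * q ^ N)
    with (Cmod (phi_prod z beta) * (q ^ N / (1 - q)) + K * q ^ N / (1 - q)) by (field; lra).
  lra.
Qed.

End PhiBoxCons.

Lemma phi_box_error (z : C) (t : R) (beta : list nat) :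
  Re z < 0 -> 0 <= t -> (forall b, In b beta -> (0 < b)%nat) ->
  exists K, forall lo N,
    Cmod (phi_box beta t z lo N - phi_box_lim z t beta lo)%C <= K * exp (Re z) ^ N.
Proof.
  intros Hre Ht. induction beta as [|b beta IH]; intros Hpos.
  - exists 0. intros lo N. unfold phi_box_lim. cbn [phi_box phi_prod list_sum].
    rewrite Rmult_0_r, Cmult_0_l, cexp_0.
    replace (1 - 1 * 1)%C with (RtoC 0) by ring. rewrite Cmod_0. lra.
  - destruct IH as [K HK]; [intros b' Hb'; apply Hpos; now right|].
    eexists. apply (phi_box_cons_error z t b beta Hre Ht); [apply Hpos; now left | exact HK].
Qed.

Lemma filterlim_geom_error (u : nat -> C) (l : C) (K q : R) :
  0 <= q < 1 -> (forall N, Cmod (u N - l)%C <= K * q ^ N) ->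
  filterlim u eventually (locally l).
Proof.
  intros Hq Hu.
  assert (HK : 0 <= K) by (pose proof (Cmod_ge_0 (u O - l)%C); specialize (Hu O); simpl in Hu; lra).
  apply filterlim_locally. intros eps.
  assert (Heps : 0 < eps / (K + 1)) by (apply Rdiv_lt_0_compat; [apply cond_pos | lra]).
  destruct (pow_lt_1_zero q ltac:(rewrite Rabs_pos_eq; lra) _ Heps) as [N0 HN0].
  exists N0. intros n Hn. apply (norm_compat1 (V := C_NormedModule)).
  change (norm (minus (u n) l)) with (Cmod (u n - l)%C).
  specialize (HN0 n Hn). rewrite Rabs_pos_eq in HN0 by (apply pow_le; lra).
  eapply Rle_lt_trans; [apply Hu|].
  apply Rle_lt_trans with (K * (eps / (K + 1))); [apply Rmult_le_compat_l; lra|].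
  replace (K * (eps / (K + 1))) with (eps - eps / (K + 1)) by (field; lra). lra.
Qed.

Lemma is_series_div_Cpow (a : nat -> R) (z l : C) (k : nat) : z <> 0%C ->
  is_series (fun n => (a n * z ^ n)%C) (z ^ k * l)%C ->
  is_series (fun n => (a n * (z ^ n / z ^ k))%C) l.
Proof.
  intros Hz Hs. assert (Hzk : (z ^ k)%C <> 0%C) by now apply Cpow_nz.
  replace l with (/ z ^ k * (z ^ k * l))%C by (field; exact Hzk).
  eapply is_series_ext; [|exact (is_series_scal (K := C_AbsRing) _ _ _ Hs)].
  intros n. change (scal ?x ?y) with (Cmult x y). unfold Cdiv. ring_eq.
Qed.

Theorem corollary3p8 (beta : list nat) (t : R) :
  (1 <= length beta)%nat ->
  (forall b, In b beta -> (0 < b)%nat) ->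
  0 <= t ->
  exists r : R, 0 < r /\
    forall z : C, Re z < 0 -> Cmod z < r ->
      exists L : C,
        filterlim (phi_partial beta t z) eventually (locally L) /\
        is_series (fun n : nat =>
          Cmult (RtoC (coef beta t n)) (Cdiv (Cpow z n) (Cpow z (length beta)))) L.
Proof.
  intros Hlen Hpos Ht.
  destruct beta as [|b beta]; [simpl in Hlen; lia|].
  pose proof (list_sum_pos b beta Hpos) as HB.
  set (B := INR (list_sum (b :: beta))) in HB.
  exists (/ (2 * B)). split; [apply Rinv_0_lt_compat; lra|].
  intros z Hre Hz. exists (phi_box_lim z t (b :: beta) 0). split.
  - destruct (phi_box_error z t (b :: beta) Hre Ht Hpos) as [K HK].
    apply (filterlim_geom_error _ _ K (exp (Re z))); [|intros N; apply HK].
    split; [left; apply exp_pos | now apply exp_neg_lt_1].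
  - assert (Hz' : 2 * (B * Cmod z) < 1).
    { apply (Rmult_lt_compat_l (2 * B)) in Hz; [|lra]. rewrite Rinv_r in Hz by lra. lra. }
    destruct (is_Cpseries_coef z t b beta Hre Hpos Hz') as [Hs _].
    apply is_series_div_Cpow; [|exact Hs]. intros E. rewrite E in Hre. simpl in Hre. lra.
Qed.
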